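(* Let $(\mathcal M,X,\bot)$ be a concurrent system. (1) If $\alpha\in X$ satisfies $\mathcal M_\alpha\ne\{\varepsilon\}$, then every pair $(\alpha,c)$ with $c$ a maximal element (for inclusion) of $\mathfrak C_\alpha$ is a positive node of the DSC. (2) If $((\alpha,c),(\alpha',c'))$ is an arc of the DSC and $(\alpha',c')$ is positive, then $(\alpha,c)$ is positive. (3) For every $\alpha\in X$ and every $x\in\mathcal M_\alpha$ there exists $y\in\mathcal M_{\alpha\cdot x}$ such that $xy$ has the same height as $x$ and all nodes of the DSC path corresponding to $xy$ are positive. (4) If $(\alpha,c)$ is a null node, then for every $x\in\mathcal M_\alpha$ with $C_1(x)=c$ there exists a letter $a\in\Sigma$ such that $x\in\mathcal M^a$, i.e. $x$ has no occurrence of $a$.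
   Context: A trace monoid $\mathcal M=\mathcal M(\Sigma,I)$ is $\langle\Sigma\mid ab=ba\ ((a,b)\in I)\rangle$, $\Sigma$ finite, $I$ irreflexive symmetric; $\varepsilon$ is the unit; for $a\in\Sigma$, $\mathcal M^a=\langle\Sigma\setminus\{a\}\rangle$. A clique is a trace of pairwise distinct letters pairwise in $I$; $\mathfrak C$ is the set of nonempty cliques; for $c,c'\in\mathfrak C$, $c\to c'$ means every letter of $c'$ is in relation $(\Sigma\times\Sigma)\setminus I$ with some letter of $c$. Each nonempty trace $x$ has a unique normal form $x=c_1\cdots c_h$, $c_i\in\mathfrak C$, $c_i\to c_{i+1}$; $h$ is the height of $x$ (height of $\varepsilon$ is $0$) and $C_1(x)=c_1$. A concurrent system $(\mathcal M,X,\bot)$: $X$ finite, $\bot\notin X$, right action of $\mathcal M$ on $X\cup\{\bot\}$ with $\bot\cdot x=\bot$; $\mathcal M_\alpha=\{x:\alpha\cdot x\ne\bot\}$, $\mathfrak C_\alpha=\mathfrak C\cap\mathcal M_\alpha$. DSC: nodes $(\alpha,c)$, $c\in\mathfrak C_\alpha$, arc $(\alpha,c)\to(\beta,d)$ iff $\beta=\alpha\cdot c$ and $c\to d$. The DSC path corresponding to $x\in\mathcal M_\alpha\setminus\{\varepsilon\}$ with normal form $c_1\cdots c_h$ is $((\alpha_0,c_1),\dots,(\alpha_{h-1},c_h))$, $\alpha_0=\alpha$, $\alpha_{i}=\alpha_{i-1}\cdot c_{i}$. A node $(\alpha,c)$ is positive if there exists $x\in\mathcal M_\alpha$ with $C_1(xy)=c$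 for all $y\in\mathcal M_{\alpha\cdot x}$; it is null otherwise. *)

From Stdlib Require Import Relations.
From mathcomp Require Import all_boot.
Set Implicit Arguments. Unset Strict Implicit. Unset Printing Implicit Defensive.

Section TraceMonoid.
Variable Sigma : finType.
Variable I : rel Sigma.

(* Traces are represented by words; two words denote the same trace iff they
   are related by the congruence generated by ab = ba, (a,b) \in I. *)
Definition swap_step (u v : seq Sigma) : Prop :=
  exists p q a b, I a b /\ u = p ++ [:: a; b] ++ q /\ v = p ++ [:: b; a] ++ q.
Definition tequiv : relation (seq Sigma) := clos_refl_trans _ swap_step.

(* A clique is determined by its (nonempty) set of pairwise independent letters;
   the trace of a clique c is the word enum c (any order gives the same trace). *)
Definition is_clique (c : {set Sigma}) : bool :=
  [forall a in c, forall b in c, (a != b) ==> I a b].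
Definition nclique (c : {set Sigma}) : bool := is_clique c && (c != set0).
Definition clique_word (c : {set Sigma}) : seq Sigma := enum c.

Definition arrow (c c' : {set Sigma}) : bool :=
  [forall b in c', exists a in c, ~~ I a b].

Definition is_nf (cs : seq {set Sigma}) : bool := all nclique cs && sorted arrow cs.
Definition nf_of (x : seq Sigma) (cs : seq {set Sigma}) : Prop :=
  is_nf cs /\ tequiv x (flatten (map clique_word cs)).
(* C_1(x) = c  (normal forms are unique) *)
Definition C1 (x : seq Sigma) (c : {set Sigma}) : Prop := exists cs, nf_of x (c :: cs).

(* Concurrent system: right action given on letters, extended to words;
   None plays the role of the sink state \bot. *)
Variable X : finType.
Variable delta : X -> Sigma -> option X.

Fixpoint act (alpha : X) (u : seq Sigma) : option X :=
  match u with
  | [::] => Some alpha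
  | a :: u' => if delta alpha a is Some b then act b u' else None
  end.
Definition acto (s : option X) (u : seq Sigma) : option X :=
  if s is Some b then act b u else None.

Definition inM (alpha : X) (u : seq Sigma) : bool := act alpha u != None.
Definition inMo (s : option X) (u : seq Sigma) : bool := acto s u != None.

Definition action_of_trace_monoid : Prop :=
  forall alpha u v, tequiv u v -> act alpha u = act alpha v.

Definition node (alpha : X) (c : {set Sigma}) : bool :=
  nclique c && inM alpha (clique_word c).
Definition dsc_arc (alpha : X) (c : {set Sigma}) (beta : X) (d : {set Sigma}) : Prop :=
  node alpha c /\ node beta d /\ act alpha (clique_word c) = Some beta /\ arrow c d.

Definition maximal_in_C (alpha : X) (c : {set Sigma}) : Prop :=
  node alpha c /\ forall c', node alpha c' -> c \subset c' -> c' = c.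

Definition positive (alpha : X) (c : {set Sigma}) : Prop :=
  exists x, inM alpha x /\ forall y, inMo (act alpha x) y -> C1 (x ++ y) c.
Definition null_node (alpha : X) (c : {set Sigma}) : Prop :=
  node alpha c /\ ~ positive alpha c.

Fixpoint dsc_path_positive (alpha : X) (cs : seq {set Sigma}) : Prop :=
  match cs with
  | [::] => True
  | c :: cs' => positive alpha c /\
      match act alpha (clique_word c) with
      | Some beta => dsc_path_positive beta cs'
      | None => False
      end
  end.

End TraceMonoid.

(* The first clique of the normal form of a trace [w] is the set of its minimal
   letters, those that can be commuted to the front of [w] ([min_letter]).
   Prefixing a trace can only enlarge this set, and a prefix containing every letter
   fixes it: this gives (1) for a maximal clique and, contrapositively, (4). Part (2)
   follows by prefixing with the clique of the source of the arc. For (3), as long as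
   the last clique [L] of the normal form of [x y] is not maximal at its state, append
   to [y] a letter of a strictly larger clique; it commutes with [L], so the height of
   the normal form does not change. A trace of height [h] has length at most
   [h * #|Sigma|], so this stops with [L] maximal, and (1) and (2) then propagate
   positivity backwards along the path. *)

From mathcomp Require Import all_boot zify.
From Stdlib Require Import Relations.
Set Implicit Arguments. Unset Strict Implicit. Unset Printing Implicit Defensive.

Section ConcurrentSystem.
Variables (Sigma : finType) (I : rel Sigma).
Hypothesis I_irr : forall a, ~~ I a a.
Hypothesis I_sym : forall a b, I a b = I b a.

Notation teq := (tequiv I).
Implicit Types (a b z : Sigma) (u v w : seq Sigma) (c d L : {set Sigma}).
Implicit Types (cs ds : seq {set Sigma}).

Lemma teq_refl u : teq u u. Proof. exact: rt_refl. Qed.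

Lemma teq_trans u v w : teq u v -> teq v w -> teq u w. Proof. exact: rt_trans. Qed.

Lemma teq_sym u v : teq u v -> teq v u.
Proof.
elim=> [{}u {}v [p [q [a [b [Iab [-> ->]]]]]]|{}u|{}u {}v w _ Hvu _ Hwv].
- by apply: rt_step; exists p, q, b, a; rewrite I_sym.
- exact: teq_refl.
- exact: teq_trans Hwv Hvu.
Qed.

Lemma teq_cat p q u v : teq u v -> teq (p ++ u ++ q) (p ++ v ++ q).
Proof.
elim=> [{}u {}v [p' [q' [a [b [Iab [-> ->]]]]]]|{}u|{}u {}v w _ Huv _ Hvw].
- by apply: rt_step; exists (p ++ p'), (q' ++ q), a, b; rewrite -!catA.
- exact: teq_refl.
- exact: teq_trans Huv Hvw.
Qed.

Lemma teq_catl p u v : teq u v -> teq (p ++ u) (p ++ v).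
Proof. by move/(teq_cat p [::]); rewrite !cats0. Qed.

Lemma teq_catr q u v : teq u v -> teq (u ++ q) (v ++ q).
Proof. exact: teq_cat [::] q u v. Qed.

Lemma teq_size u v : teq u v -> size u = size v.
Proof.
by elim=> [{}u {}v [p [q [a [b [_ [-> ->]]]]]]|//|{}u {}v w _ -> _ ->] //; rewrite !size_cat.
Qed.

Lemma teq_commute a u : all (I^~ a) u -> teq (u ++ [:: a]) (a :: u).
Proof.
elim: u => [|b u IH] /=; first by move=> _; exact: teq_refl.
case/andP=> Iba /IH Hu; apply: teq_trans (teq_catl [:: b] Hu) _.
by apply: rt_step; exists [::], u, b, a.
Qed.

Lemma teq_perm u v : uniq u -> perm_eq u v ->
  {in u &, forall a b, a != b -> I a b} -> teq u v.
Proof.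
elim: u v => [|a u IH] v; first by move=> _ /perm_size/esym/size0nil -> _; exact: teq_refl.
move=> /= /andP[au uniq_u] Hp Iu.
have /splitPr Ev : a \in v by rewrite -(perm_mem Hp) mem_head.
case: {v}Ev Hp => v1 v2 Hp.
have Hp' : perm_eq u (v1 ++ v2).
  by rewrite -(perm_cons a); apply: perm_trans Hp _; rewrite -cat1s perm_catCA.
have av1 : a \notin v1.
  by move: (perm_uniq Hp); rewrite /= au uniq_u cat_uniq /= => /esym/and4P[_ /norP[]].
have Iu' : {in u &, forall b b', b != b' -> I b b'}.
  by move=> b b' bu b'u; apply: Iu; rewrite inE ?bu ?b'u orbT.
apply: teq_trans (teq_catl [:: a] (IH _ uniq_u Hp' Iu')) _.
rewrite -[v1 ++ a :: v2]/(v1 ++ [:: a] ++ v2) !catA.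
apply/teq_catr/teq_sym/teq_commute/allP => b bv1; apply: Iu.
- by rewrite inE (perm_mem Hp') mem_cat bv1 orbT.
- exact: mem_head.
- by apply: contraNneq av1 => <-.
Qed.

Lemma cliqueP c : reflect {in c &, forall a b, a != b -> I a b} (is_clique I c).
Proof.
apply: (iffP forallP) => [H a b ac bc | H a]; last first.
  by apply/implyP => ac; apply/forallP => b; apply/implyP => bc; apply/implyP; exact: H.
by move/implyP: (H a) => /(_ ac) /forallP /(_ b) /implyP /(_ bc) /implyP.
Qed.

Lemma teq_clique c u : is_clique I c -> uniq u -> u =i c -> teq u (enum c).
Proof.
move=> /cliqueP Ic uniq_u uc; apply: teq_perm => //.
  by apply: uniq_perm; rewrite ?enum_uniq // => a; rewrite uc mem_enum.
by move=> a b; rewrite !uc; exact: Ic.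
Qed.

Lemma all_indep_notin a u : all (I^~ a) u -> a \notin u.
Proof. by apply: contraL => au; apply/allPn; exists a; rewrite ?I_irr. Qed.

Lemma is_clique_setU1 a c : is_clique I c -> all (I^~ a) (enum c) -> is_clique I (a |: c).
Proof.
move=> /cliqueP Ic /allP Iac; apply/cliqueP => x y; rewrite !in_setU1.
have Ia b : b \in c -> I b a by move=> bc; apply: Iac; rewrite mem_enum.
case/predU1P=> [->|xc] /predU1P[->|yc] xy.
- by rewrite eqxx in xy.
- by rewrite I_sym Ia.
- exact: Ia.
- exact: Ic.
Qed.

Lemma teq_enum_setU1 a c : is_clique I (a |: c) -> a \notin c ->
  teq (enum c ++ [:: a]) (enum (a |: c)).
Proof.
move=> Iac ac; apply: teq_clique => //.
  by rewrite cats1 rcons_uniq mem_enum ac enum_uniq.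
by move=> b; rewrite mem_cat mem_enum mem_seq1 in_setU1 orbC.
Qed.

Fixpoint min_letter u z : bool :=
  if u is b :: u' then (b == z) || I b z && min_letter u' z else false.

Definition first_clique w : {set Sigma} := [set z | min_letter w z].

Lemma min_letter_cat u v z :
  min_letter (u ++ v) z = min_letter u z || all (I^~ z) u && min_letter v z.
Proof. by elim: u => //= b u ->; case: (b == z); case: (I b z). Qed.

Lemma min_letter_teq u v z : teq u v -> min_letter u z = min_letter v z.
Proof.
elim=> [{}u {}v [p [q [a [b [Iab [-> ->]]]]]]|//|{}u {}v w _ -> _ ->] //.
rewrite !min_letter_cat /= !andbA; congr (_ || _).
have Iba : I b a by rewrite I_sym.
by case: eqP => [<-|]; case: eqP => [<-|] //=; rewrite ?Iab ?Iba ?orbT;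
   case: (I a z); case: (I b z).
Qed.

Lemma min_letter_mem u z : min_letter u z -> z \in u.
Proof.
by elim: u => //= b u IH /orP[/eqP->|/andP[_ /IH]]; rewrite inE ?eqxx // => ->; rewrite orbT.
Qed.

Lemma first_clique_catl u v : first_clique u \subset first_clique (u ++ v).
Proof. by apply/subsetP => z; rewrite !inE min_letter_cat => ->. Qed.

Lemma first_clique_cat_full u v :
  (forall a, a \in u) -> first_clique (u ++ v) = first_clique u.
Proof.
move=> u_full; apply/setP => z; rewrite !inE min_letter_cat.
have /negbTE-> : ~~ all (I^~ z) u by apply: contraL (u_full z); exact: all_indep_notin.
by rewrite orbF.
Qed.

Lemma min_letter_enum c z : is_clique I c -> min_letter (enum c) z = (z \in c).
Proof.
move=> /cliqueP Ic; apply/idP/idP => [/min_letter_mem|zc]; first by rewrite mem_enum.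
have : z \in enum c by rewrite mem_enum.
have : {in enum c, forall b, b != z -> I b z}.
  by move=> b; rewrite mem_enum => bc; apply: Ic.
elim: (enum c) => //= b u IH Iu; case: (eqVneq b z) => [//|bz].
rewrite inE eq_sym (negbTE bz) Iu ?mem_head //= => zu.
by apply: IH => // b' b'u; apply: Iu; rewrite inE b'u orbT.
Qed.

Lemma first_clique_enum c : is_clique I c -> first_clique (enum c) = c.
Proof. by move=> Ic; apply/setP => z; rewrite inE min_letter_enum. Qed.

Definition flat cs : seq Sigma := flatten (map (@clique_word Sigma) cs).

Lemma flat_cons c cs : flat (c :: cs) = enum c ++ flat cs. Proof. by []. Qed.

Lemma flat_rcons cs c : flat (rcons cs c) = flat cs ++ enum c.
Proof. by rewrite /flat map_rcons flatten_rcons. Qed.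

Lemma size_flat cs : size (flat cs) <= size cs * #|Sigma|.
Proof. by elim: cs => //= c cs IH; rewrite size_cat mulSn -cardE leq_add ?max_card. Qed.

Lemma nclique1 a : nclique I [set a].
Proof.
apply/andP; split; last by apply/set0Pn; exists a; rewrite set11.
by apply/cliqueP => x y; rewrite !inE => /eqP-> /eqP->; rewrite eqxx.
Qed.

Lemma arrowP c d : reflect {in d, forall b, exists2 a, a \in c & ~~ I a b} (arrow I c d).
Proof.
apply: (iffP forallP) => [H b bd | H b]; last first.
  by apply/implyP => /H[a ac Iab]; apply/existsP; exists a; rewrite ac.
by move/implyP: (H b) => /(_ bd) /existsP[a /andP[ac Iab]]; exists a.
Qed.

Lemma arrowSl c c' d : c \subset c' -> arrow I c d -> arrow I c' d.
Proof.
move=> cc' /arrowP cd; apply/arrowP => b /cd[a ac Iab].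
by exists a; first exact: subsetP ac.
Qed.

Lemma is_nf_cons c cs : is_nf I (c :: cs) =
  [&& nclique I c, is_nf I cs & if cs is d :: _ then arrow I c d else true].
Proof.
rewrite /is_nf /=; case: cs => [|d ds] /=; first by rewrite !andbT.
by case: (nclique I c); case: (nclique I d); case: (arrow I c d); rewrite /= ?andbT ?andbF.
Qed.

Lemma nf_tail_min_letter c cs z :
  is_nf I (c :: cs) -> min_letter (flat cs) z -> ~~ all (I^~ z) (enum c).
Proof.
elim: cs c => // d ds IH c; rewrite is_nf_cons => /and3P[_ nf_d cd].
rewrite flat_cons min_letter_cat => /orP[/min_letter_mem zd|/andP[Idz /(IH _ nf_d)]].
  have [a ac Iaz] : exists2 a, a \in c & ~~ I a z by apply: (arrowP _ _ cd); rewrite -mem_enum.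
  by apply/allPn; exists a; rewrite ?mem_enum.
by rewrite Idz.
Qed.

Lemma min_letter_nf c cs z : is_nf I (c :: cs) -> min_letter (flat (c :: cs)) z = (z \in c).
Proof.
move=> nf_c; have := nf_c; rewrite is_nf_cons => /and3P[/andP[Ic _] _ _].
rewrite flat_cons min_letter_cat min_letter_enum //.
case: (boolP (min_letter (flat cs) z)) => [/(nf_tail_min_letter nf_c)/negbTE->|_].
all: by rewrite ?andbF ?orbF.
Qed.

Lemma nf_of_first_clique w c cs : nf_of I w (c :: cs) -> c = first_clique w.
Proof.
by case=> nf_c w_c; apply/setP => z; rewrite inE (min_letter_teq _ w_c) min_letter_nf.
Qed.

Lemma C1_first_clique w c : C1 I w c -> c = first_clique w.
Proof. by case=> cs /nf_of_first_clique. Qed.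

Fixpoint ins a cs : seq {set Sigma} :=
  if cs is c :: cs' then
    if all (I^~ a) (enum c ++ flat cs') then (a |: c) :: cs' else c :: ins a cs'
  else [:: [set a]].

Lemma is_nf_ins a cs : is_nf I cs -> is_nf I (ins a cs).
Proof.
elim: cs => [|c cs IH] /=; first by rewrite /is_nf /= nclique1.
rewrite is_nf_cons all_cat => /and3P[/andP[Ic c0] nf_cs cd].
case: ifP => [/andP[Iac Ia]|Na].
  rewrite is_nf_cons nf_cs /nclique is_clique_setU1 //=; apply/andP; split.
    by apply/set0Pn; exists a; rewrite setU11.
  by case: cs cd {nf_cs IH Ia} => // d ds; apply: arrowSl; rewrite subsetUr.
rewrite is_nf_cons /nclique Ic c0 IH //=.
case: cs Na nf_cs cd {IH} => [|d ds] /=.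
  rewrite andbT => /negbT/allPn[b bc Iba] _ _.
  by apply/arrowP => x; rewrite inE => /eqP->; exists b; rewrite mem_enum in bc.
rewrite all_cat; case: ifP => // /andP[Ida Ia] Na _ cd.
apply/arrowP => x; rewrite in_setU1 => /predU1P[->|/(arrowP _ _ cd)//].
move: Na; rewrite andbT => /negbT/allPn[b bc Iba].
by exists b; rewrite mem_enum in bc.
Qed.

Lemma teq_ins a cs : is_nf I cs -> teq (flat cs ++ [:: a]) (flat (ins a cs)).
Proof.
elim: cs => [|c cs IH] /=.
  by move=> _; rewrite /flat /clique_word /= enum_set1; exact: teq_refl.
rewrite is_nf_cons => /and3P[/andP[Ic _] nf_cs _].
rewrite flat_cons -catA all_cat; case: ifP => [/andP[Iac Ia]|_]; rewrite flat_cons.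
  apply: teq_trans (teq_catl _ (teq_commute Ia)) _.
  rewrite -[enum c ++ a :: flat cs]/(enum c ++ [:: a] ++ flat cs) catA.
  apply/teq_catr/teq_enum_setU1; first exact: is_clique_setU1.
  by rewrite -mem_enum all_indep_notin.
exact/teq_catl/IH.
Qed.

Lemma nf_of_rcons a w cs : nf_of I w cs -> nf_of I (w ++ [:: a]) (ins a cs).
Proof.
case=> nf_cs w_cs; split; first exact: is_nf_ins.
exact: teq_trans (teq_catr _ w_cs) (teq_ins a nf_cs).
Qed.

Lemma nf_exists w : exists cs, nf_of I w cs.
Proof.
elim/last_ind: w => [|w a [cs w_cs]]; first by exists [::]; split => //; exact: teq_refl.
by exists (ins a cs); rewrite -cats1; exact: nf_of_rcons.
Qed.

Lemma first_clique_C1 w : w != [::] -> C1 I w (first_clique w).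
Proof.
have [[|c cs] w_cs] := nf_exists w; last by exists cs; rewrite -(nf_of_first_clique w_cs).
by case: w_cs => _ /teq_size; case: w.
Qed.

Lemma size_nf_of w cs : nf_of I w cs -> size w <= size cs * #|Sigma|.
Proof. by case=> _ /teq_size->; exact: size_flat. Qed.

Lemma size_ins_rcons a cs L :
  all (I^~ a) (enum L) -> size (ins a (rcons cs L)) = (size cs).+1.
Proof.
move=> IaL; elim: cs => [|c cs IH] /=; first by rewrite /flat /= cats0 IaL.
by case: ifP => _ /=; rewrite ?IH ?size_rcons.
Qed.

Variables (X : finType) (delta : X -> Sigma -> option X).
Hypothesis Hact : action_of_trace_monoid I delta.
Implicit Types (al be : X).

Lemma act_cat al u v : act delta al (u ++ v) = acto delta (act delta al u) v.
Proof. by elim: u al => //= a u IH al; case: (delta al a). Qed.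

Lemma inM_catl al u v : inM delta al (u ++ v) -> inM delta al u.
Proof. by rewrite /inM act_cat; case: (act delta al u). Qed.

Lemma inM_teq al u v : teq u v -> inM delta al u = inM delta al v.
Proof. by move=> /Hact Huv; rewrite /inM Huv. Qed.

Lemma node_C1 al w c : inM delta al w -> C1 I w c -> node I delta al c.
Proof.
move=> w_al [cs [nf_c w_c]]; move: nf_c; rewrite is_nf_cons => /and3P[c_cl _ _].
rewrite /node c_cl; apply: (@inM_catl _ _ (flat cs)).
by rewrite -flat_cons -(inM_teq _ w_c).
Qed.

Lemma node_subset al c d : node I delta al d -> c \subset d -> c != set0 -> node I delta al c.
Proof.
case/andP=> /andP[Id _] d_al cd c0.
have Ic : is_clique I c.
  by apply/cliqueP => x y xc yc; move/cliqueP: Id; apply; exact: (subsetP cd).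
rewrite /node /nclique Ic c0; apply: (@inM_catl _ _ (enum (d :\: c))).
rewrite (inM_teq _ (teq_clique Id _ _)) //.
  rewrite cat_uniq !enum_uniq andbT /=; apply/hasPn => x.
  by rewrite !mem_enum in_setD => /andP[].
move=> x; rewrite mem_cat !mem_enum in_setD.
by case: (boolP (x \in c)) => //= /(subsetP cd).
Qed.

Lemma positive_maximal al c : maximal_in_C I delta al c -> positive I delta al c.
Proof.
case=> c_node c_max; have /andP[/andP[Ic c0] c_al] := c_node.
exists (clique_word c); split=> // y y_al.
have cy_al : inM delta al (clique_word c ++ y) by rewrite /inM act_cat.
have cy0 : clique_word c ++ y != [::].
  by case/set0Pn: c0 => z; rewrite /clique_word -mem_enum; case: (enum c).
have cd : c \subset first_clique (clique_word c ++ y).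
  by rewrite -{1}(first_clique_enum Ic) first_clique_catl.
have d_node := node_C1 cy_al (first_clique_C1 cy0).
by move: (first_clique_C1 cy0); rewrite (c_max _ d_node cd).
Qed.

Lemma positive_arc al c al' c' : dsc_arc I delta al c al' c' ->
  positive I delta al' c' -> positive I delta al c.
Proof.
case=> c_node [_ [c_al' cc']] [x' [x'_al' C1_x']].
exists (clique_word c ++ x'); split; first by rewrite /inM act_cat c_al'.
move=> y; rewrite act_cat c_al' => /C1_x'[cs [nf_c' x'_c']].
exists (c' :: cs); split; last by rewrite -catA; exact: teq_catl.
by rewrite is_nf_cons nf_c' cc' !andbT; case/andP: c_node.
Qed.

Lemma null_node_missing_letter al c x : null_node I delta al c ->
  inM delta al x -> C1 I x c -> exists a, a \notin x.
Proof.
case=> /andP[/andP[_ /set0Pn[z zc]] _] not_pos x_al x_c.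
have [/forallP x_full|] := boolP [forall a, a \in x]; last first.
  by rewrite negb_forall => /existsP.
case: not_pos; exists x; split=> // y _.
have xy0 : x ++ y != [::] by have := x_full z; case: x {x_al x_c x_full}.
by rewrite (C1_first_clique x_c) -(first_clique_cat_full y x_full); exact: first_clique_C1.
Qed.

Lemma dsc_path_positive_rcons al cs L be :
  is_nf I (rcons cs L) -> act delta al (flat cs) = Some be ->
  node I delta be L -> positive I delta be L -> dsc_path_positive I delta al (rcons cs L).
Proof.
move=> + + L_be L_pos; elim: cs al => [|c cs IH] al /=.
  by move=> _ [->]; split=> //; case/andP: L_be => _; rewrite /inM; case: act.
rewrite is_nf_cons act_cat => /and3P[c_cl nf_cs c_next].
case E: (act delta al (clique_word c)) => [al'|] //= cs_al'.
have path_al' := IH al' nf_cs cs_al'.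
have cs_L_al' : inM delta al' (flat (rcons cs L)).
  by rewrite /inM flat_rcons act_cat cs_al'; case/andP: L_be.
split=> //; case Ecs: (rcons cs L) path_al' c_next nf_cs cs_L_al' => [|d ds].
  by move/(f_equal size): Ecs; rewrite size_rcons.
case=> d_pos _ cd nf_d /inM_catl d_al'; apply: positive_arc d_pos.
have d_cl : nclique I d by move: nf_d; rewrite is_nf_cons => /and3P[].
split; first by rewrite /node c_cl /inM E.
by split; first by rewrite /node d_cl.
Qed.

Lemma positive_or_extensible al w cs L :
  inM delta al w -> nf_of I w (rcons cs L) ->
  dsc_path_positive I delta al (rcons cs L) \/
  exists2 a, inM delta al (w ++ [:: a]) & all (I^~ a) (enum L).
Proof.
move=> w_al [nf_csL w_csL].
have [be E L_be] : exists2 be, act delta al (flat cs) = Some be & inM delta be (enum L).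
  move: w_al; rewrite (inM_teq _ w_csL) -/(flat _) /inM flat_rcons act_cat.
  by case: act => // be; exists be.
have L_node : node I delta be L.
  apply/andP; split; last exact: L_be.
  by case/andP: nf_csL => /allP-> //; rewrite mem_rcons mem_head.
have [/existsP[d /andP[d_node /properP[Ld [a ad aL]]]]|/existsPn no_larger] :=
  boolP [exists d, node I delta be d && (L \proper d)]; [right|left].
  have /andP[/andP[Id _] _] := d_node.
  have IaL : all (I^~ a) (enum L).
    apply/allP => b; rewrite mem_enum => bL; apply: (cliqueP _ Id) => //.
      exact: subsetP bL.
    by apply: contraNneq aL => <-.
  exists a => //.
  rewrite (inM_teq _ (teq_catr _ w_csL)) -/(flat _) flat_rcons -catA /inM act_cat E /=.
  have aL_node : node I delta be (a |: L).
    apply: node_subset d_node _ _; first by rewrite subUset sub1set ad Ld.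
    by apply/set0Pn; exists a; rewrite setU11.
  case/andP: aL_node => /andP[IaL' _] aL_be.
  by rewrite (Hact be (teq_enum_setU1 IaL' aL)).
apply: (dsc_path_positive_rcons nf_csL E L_node).
apply: positive_maximal; split=> // d d_node Ld; apply/eqP.
by move: (no_larger d); rewrite d_node properEneq Ld andbT negbK eq_sym.
Qed.

Lemma positive_completion al w cs : inM delta al w -> nf_of I w cs ->
  exists y cs', [/\ inM delta al (w ++ y), nf_of I (w ++ y) cs', size cs' = size cs
                  & dsc_path_positive I delta al cs'].
Proof.
have [k] := ubnP (size cs * #|Sigma| - size w).
elim: k w cs => // k IH w cs lt_k w_al w_cs.
case/lastP: cs w_cs lt_k => [|cs L] w_cs lt_k; first by exists [::], [::]; rewrite cats0.
have [path_pos|[a wa_al IaL]] := positive_or_extensible w_al w_cs.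
  by exists [::], (rcons cs L); rewrite cats0.
have wa_cs := nf_of_rcons a w_cs.
have := size_nf_of wa_cs; rewrite size_ins_rcons // size_cat /= => wa_bound.
have [|y [cs' [wy_al wy_cs' size_cs' path_pos]]] := IH _ _ _ wa_al wa_cs.
  by move: lt_k; rewrite size_ins_rcons // size_rcons size_cat /=; lia.
by exists (a :: y), cs'; rewrite -cat1s catA size_cs' size_ins_rcons // size_rcons.
Qed.

End ConcurrentSystem.

Theorem proposition6 (Sigma X : finType) (I : rel Sigma)
  (I_irr : forall a, ~~ I a a) (I_sym : forall a b, I a b = I b a)
  (delta : X -> Sigma -> option X)
  (Hact : action_of_trace_monoid I delta) :
  (* (1) *)
  (forall alpha : X, (exists x, inM delta alpha x /\ x <> [::]) ->
     forall c, maximal_in_C I delta alpha c -> positive I delta alpha c) /\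
  (* (2) *)
  (forall alpha c alpha' c', dsc_arc I delta alpha c alpha' c' ->
     positive I delta alpha' c' -> positive I delta alpha c) /\
  (* (3) *)
  (forall (alpha : X) x, inM delta alpha x ->
     exists y, inMo delta (act delta alpha x) y /\
       exists cs cs0, nf_of I (x ++ y) cs /\ nf_of I x cs0 /\ size cs = size cs0 /\
         dsc_path_positive I delta alpha cs) /\
  (* (4) *)
  (forall alpha c, null_node I delta alpha c ->
     forall x, inM delta alpha x -> C1 I x c -> exists a : Sigma, a \notin x).
Proof.
split; [|split; [|split]].
- (* the hypothesis of (1) is implied by [maximal_in_C], nodes being nonempty cliques *)
  by move=> alpha _ c; exact: positive_maximal.
- exact: positive_arc.
- move=> alpha x x_al; have [cs0 x_cs0] := nf_exists I_irr I_sym x.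
  have [y [cs [xy_al xy_cs size_cs path_pos]]] :=
    positive_completion I_irr I_sym Hact x_al x_cs0.
  exists y; split; first by move: xy_al; rewrite /inM act_cat.
  by exists cs, cs0.
- move=> alpha c null_c x; exact: null_node_missing_letter.
Qed.
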